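(* Let $d\ge1$ and $L\ge2$ be integers, $\alpha\ge0$, $\delta\ge 0$, and let $W_1,\dots,W_{L-1}\in\mathbb{R}^{d\times d}$ satisfy $\|W_l\|_2\le\alpha$ for $l=1,\dots,L-1$ and $\|W_{l+1}^\intercal W_{l+1}-W_lW_l^\intercal\|_2\le\delta$ for $l=1,\dots,L-2$. Then $$\left\|W_{L-1:1}W_{L-1:1}^\intercal-\left(W_{L-1}W_{L-1}^\intercal\right)^{L-1}\right\|_2\le\frac12L^2\alpha^{2(L-2)}\delta.$$
   Context: $W_{L-1:1}=W_{L-1}W_{L-2}\cdots W_1$. $\|\cdot\|_2$ denotes the spectral (operator $\ell_2$) norm of a matrix. *)

From HB Require Import structures.
From mathcomp Require Import all_boot all_order all_algebra.
From mathcomp Require Import classical_sets reals.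
Set Implicit Arguments. Unset Strict Implicit. Unset Printing Implicit Defensive.
Import Order.TTheory GRing.Theory Num.Theory.
Local Open Scope classical_set_scope.
Local Open Scope ring_scope.

Definition vnorm2 {R : realType} {n : nat} (v : 'cV[R]_n) : R :=
  Num.sqrt (\sum_(i < n) (v i 0) ^+ 2).

Definition opnorm {R : realType} {m n : nat} (A : 'M[R]_(m, n)) : R :=
  sup [set vnorm2 (A *m x) | x in [set x : 'cV[R]_n | vnorm2 x <= 1]].

Fixpoint prodW {R : realType} {d : nat} (W : nat -> 'M[R]_d) (k : nat) : 'M[R]_d :=
  match k with
  | O => 1%:M
  | S k' => W k *m prodW W k'
  end.

Fixpoint mxpow {R : realType} {d : nat} (A : 'M[R]_d) (k : nat) : 'M[R]_d :=
  match k with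
  | O => 1%:M
  | S k' => A *m mxpow A k'
  end.

From HB Require Import structures.
From mathcomp Require Import all_boot all_order all_algebra.
From mathcomp Require Import classical_sets reals.
From mathcomp Require Import ring lra zify.
Import Order.TTheory GRing.Theory Num.Theory.
Local Open Scope ring_scope.
Set Implicit Arguments. Unset Strict Implicit. Unset Printing Implicit Defensive.

(* Write P_k = W_k ... W_1 and E_k = |P_k P_k^T - (W_k W_k^T)^k|.  Both
   P_(k+1) P_(k+1)^T = W_(k+1) (P_k P_k^T) W_(k+1)^T and
   (W_(k+1) W_(k+1)^T)^(k+1) = W_(k+1) (W_(k+1)^T W_(k+1))^k W_(k+1)^T are
   conjugates by W_(k+1), so E_(k+1) <= alpha^2 (E_k + |(W_k W_k^T)^k -
   (W_(k+1)^T W_(k+1))^k|).  Telescoping the difference of k-th powers of two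
   matrices of norm at most alpha^2 bounds the last term by
   k alpha^(2(k-1)) delta, and the recursion solves to
   E_k <= k (k-1) / 2 alpha^(2(k-1)) delta. *)

Section EuclideanNorm.
Variable R : realType.
Implicit Types n : nat.

Definition vdot n (u v : 'cV[R]_n) : R := \sum_i u i 0 * v i 0.

Lemma vdotC n (u v : 'cV[R]_n) : vdot u v = vdot v u.
Proof. by apply: eq_bigr => i _; rewrite mulrC. Qed.

Lemma vdotE n (u v : 'cV[R]_n) : vdot u v = (u^T *m v) 0 0.
Proof. by rewrite /vdot mxE; apply: eq_bigr => i _; rewrite mxE. Qed.

Lemma vdot_trmx m n (A : 'M[R]_(m, n)) x y : vdot (A^T *m x) y = vdot x (A *m y).
Proof. by rewrite !vdotE trmx_mul trmxK mulmxA. Qed.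

Lemma vdotDl n (u v w : 'cV[R]_n) : vdot (u + v) w = vdot u w + vdot v w.
Proof. by rewrite /vdot -big_split; apply: eq_bigr => i _; rewrite mxE mulrDl. Qed.

Lemma vdotDr n (u v w : 'cV[R]_n) : vdot w (u + v) = vdot w u + vdot w v.
Proof. by rewrite vdotC vdotDl !(vdotC w). Qed.

Lemma vdot0l n (v : 'cV[R]_n) : vdot 0 v = 0.
Proof. by rewrite /vdot big1 // => i _; rewrite mxE mul0r. Qed.

Lemma vdot_ge0 n (v : 'cV[R]_n) : 0 <= vdot v v.
Proof. by apply: sumr_ge0 => i _; rewrite -expr2 sqr_ge0. Qed.

Lemma vnorm2E n (v : 'cV[R]_n) : vnorm2 v = Num.sqrt (vdot v v).
Proof. by congr Num.sqrt; apply: eq_bigr => i _; rewrite expr2. Qed.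

Lemma vnorm2_ge0 n (v : 'cV[R]_n) : 0 <= vnorm2 v.
Proof. exact: sqrtr_ge0. Qed.

Lemma vnorm2_sqr n (v : 'cV[R]_n) : vnorm2 v ^+ 2 = vdot v v.
Proof. by rewrite vnorm2E sqr_sqrtr // vdot_ge0. Qed.

Lemma vnorm2_0 n : vnorm2 (0 : 'cV[R]_n) = 0.
Proof. by rewrite vnorm2E vdot0l sqrtr0. Qed.

Lemma vnorm2Z n c (v : 'cV[R]_n) : vnorm2 (c *: v) = `|c| * vnorm2 v.
Proof.
rewrite /vnorm2 -sqrtr_sqr -sqrtrM ?sqr_ge0 // mulr_sumr.
by congr Num.sqrt; apply: eq_bigr => i _; rewrite mxE exprMn.
Qed.

Lemma vnorm2N n (v : 'cV[R]_n) : vnorm2 (- v) = vnorm2 v.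
Proof. by rewrite -scaleN1r vnorm2Z normrN normr1 mul1r. Qed.

Lemma vnorm2_coord_le n (v : 'cV[R]_n) i : `|v i 0| <= vnorm2 v.
Proof.
rewrite -sqrtr_sqr ler_sqrt; last by apply: sumr_ge0 => j _; rewrite sqr_ge0.
by rewrite (bigD1 i) //= lerDl; apply: sumr_ge0 => j _; rewrite sqr_ge0.
Qed.

Lemma vnorm2_eq0 n (v : 'cV[R]_n) : vnorm2 v = 0 -> v = 0.
Proof.
move=> v0; apply/matrixP => i j; rewrite ord1 mxE; apply/eqP.
by rewrite -normr_le0 -v0 vnorm2_coord_le.
Qed.

Lemma vnorm2_le_sum_norm n (v : 'cV[R]_n) : vnorm2 v <= \sum_i `|v i 0|.
Proof.
have S0 : 0 <= \sum_i `|v i 0| by apply: sumr_ge0.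
rewrite -(ger0_norm S0) -sqrtr_sqr ler_sqrt ?sqr_ge0 // [X in _ <= X]expr2 mulr_suml.
apply: ler_sum => i _; rewrite -real_normK ?num_real // expr2 ler_wpM2l //.
by rewrite (bigD1 i) //= lerDl; apply: sumr_ge0.
Qed.

Lemma vdot_le n (u v : 'cV[R]_n) : vdot u v <= vnorm2 u * vnorm2 v.
Proof.
set s := vnorm2 u; set t := vnorm2 v.
have s0 : 0 <= s := vnorm2_ge0 u; have t0 : 0 <= t := vnorm2_ge0 v.
(* Lagrange: sum_i (t u_i - s v_i)^2 = 2 s t (s t - <u, v>). *)
have lagrange : 0 <= s * t * (s * t - vdot u v).
  have sum_ge0 : 0 <= \sum_i (t * u i 0 - s * v i 0) ^+ 2.
    by apply: sumr_ge0 => i _; rewrite sqr_ge0.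
  have expand : \sum_i (t * u i 0 - s * v i 0) ^+ 2
             = t ^+ 2 * vdot u u - 2 * s * t * vdot u v + s ^+ 2 * vdot v v.
    rewrite /vdot !mulr_sumr -sumrB -big_split /=.
    by apply: eq_bigr => i _; ring.
  by move: sum_ge0; rewrite expand -!vnorm2_sqr -/s -/t; nra.
have [st_gt0|st_le0] := ltP 0 (s * t); first by nra.
have /eqP : s * t = 0 by apply/eqP; rewrite eq_le st_le0 mulr_ge0.
rewrite mulf_eq0 => /orP[/eqP/vnorm2_eq0 -> | /eqP/vnorm2_eq0 ->].
- by rewrite vdot0l mulr_ge0 ?vnorm2_ge0.
- by rewrite vdotC vdot0l mulr_ge0 ?vnorm2_ge0.
Qed.

Lemma vnorm2D_le n (u v : 'cV[R]_n) : vnorm2 (u + v) <= vnorm2 u + vnorm2 v.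
Proof.
have uv := vdot_le u v.
have s0 := vnorm2_ge0 u; have t0 := vnorm2_ge0 v.
rewrite [X in X <= _]vnorm2E -(ger0_norm (addr_ge0 s0 t0)) -sqrtr_sqr.
by rewrite ler_sqrt ?sqr_ge0 // vdotDl !vdotDr (vdotC v u) -!vnorm2_sqr; nra.
Qed.

End EuclideanNorm.

Section OperatorNorm.
Variable R : realType.
Local Open Scope classical_set_scope.

Section Rectangular.
Variables m n : nat.
Implicit Types A B : 'M[R]_(m, n).

Lemma opnorm_has_ubound A :
  has_ubound [set vnorm2 (A *m x) | x in [set x : 'cV[R]_n | vnorm2 x <= 1]].
Proof.
exists (\sum_i \sum_j `|A i j|) => _ [x /= x1 <-].
apply: (le_trans (vnorm2_le_sum_norm _)); apply: ler_sum => i _.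
rewrite mxE; apply: (le_trans (ler_norm_sum _ _ _)); apply: ler_sum => j _.
by rewrite normrM ler_piMr // (le_trans (vnorm2_coord_le _ _) x1).
Qed.

Lemma vnorm2_mulmx_le_opnorm A x : vnorm2 x <= 1 -> vnorm2 (A *m x) <= opnorm A.
Proof. by move=> x1; apply: (ub_le_sup (opnorm_has_ubound A)); exists x. Qed.

Lemma opnorm_ge0 A : 0 <= opnorm A.
Proof.
by rewrite -(vnorm2_0 R m) -(mulmx0 _ A) vnorm2_mulmx_le_opnorm // vnorm2_0.
Qed.

Lemma vnorm2_mulmx_le A x : vnorm2 (A *m x) <= opnorm A * vnorm2 x.
Proof.
have [x_gt0|x_le0] := ltP 0 (vnorm2 x); last first.
  have /vnorm2_eq0 -> : vnorm2 x = 0 by apply/eqP; rewrite eq_le x_le0 vnorm2_ge0.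
  by rewrite mulmx0 !vnorm2_0 mulr0.
have x'1 : vnorm2 ((vnorm2 x)^-1 *: x) <= 1.
  by rewrite vnorm2Z ger0_norm ?invr_ge0 ?(ltW x_gt0) // mulVf ?lt0r_neq0.
move: (vnorm2_mulmx_le_opnorm A x'1).
rewrite -scalemxAr vnorm2Z ger0_norm ?invr_ge0 ?(ltW x_gt0) // => Ax.
by rewrite -ler_pdivrMr // mulrC.
Qed.

Lemma opnorm_le A c : 0 <= c ->
  (forall x, vnorm2 (A *m x) <= c * vnorm2 x) -> opnorm A <= c.
Proof.
move=> c0 Ac; apply: ge_sup; first by exists 0, 0; rewrite /= ?mulmx0 vnorm2_0.
move=> _ [x /= x1 <-]; apply: (le_trans (Ac x)).
by rewrite -[X in _ <= X]mulr1 ler_wpM2l.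
Qed.

Lemma opnorm0 : opnorm (0 : 'M[R]_(m, n)) = 0.
Proof.
apply/eqP; rewrite eq_le opnorm_ge0 andbT; apply: opnorm_le => // x.
by rewrite mul0mx !vnorm2_0 mul0r.
Qed.

Lemma opnormD_le A B : opnorm (A + B) <= opnorm A + opnorm B.
Proof.
apply: opnorm_le => [|x]; first by rewrite addr_ge0 ?opnorm_ge0.
rewrite mulmxDl mulrDl; apply: (le_trans (vnorm2D_le _ _)).
by rewrite lerD ?vnorm2_mulmx_le.
Qed.

Lemma opnormN A : opnorm (- A) = opnorm A.
Proof.
have opnormN_le B : opnorm (- B) <= opnorm B.
  by apply: opnorm_le => [|x]; rewrite ?opnorm_ge0 // mulNmx vnorm2N vnorm2_mulmx_le.
by apply/eqP; rewrite eq_le opnormN_le -{1}(opprK A) opnormN_le.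
Qed.

Lemma opnormB A B : opnorm (A - B) = opnorm (B - A).
Proof. by rewrite -opnormN opprB. Qed.

End Rectangular.

Lemma opnorm_trmx_le m n (A : 'M[R]_(m, n)) : opnorm A^T <= opnorm A.
Proof.
apply: opnorm_le => [|x]; first exact: opnorm_ge0.
set t := vnorm2 (A^T *m x).
(* |A^T x|^2 = <x, A A^T x> <= |x| |A| |A^T x| *)
have t_sqr : t ^+ 2 <= vnorm2 x * (opnorm A * t).
  rewrite /t vnorm2_sqr vdot_trmx; apply: (le_trans (vdot_le _ _)).
  by rewrite ler_wpM2l ?vnorm2_ge0 ?vnorm2_mulmx_le.
have [t_gt0|t_le0] := ltP 0 t.
  by rewrite -(ler_pM2r t_gt0) -expr2 (le_trans t_sqr) // mulrA [vnorm2 x * _]mulrC.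
by apply: le_trans t_le0 _; rewrite mulr_ge0 ?opnorm_ge0 ?vnorm2_ge0.
Qed.

Lemma opnormM_le m n p (A : 'M[R]_(m, n)) (B : 'M[R]_(n, p)) :
  opnorm (A *m B) <= opnorm A * opnorm B.
Proof.
apply: opnorm_le => [|x]; first by rewrite mulr_ge0 ?opnorm_ge0.
rewrite -mulmxA -mulrA; apply: (le_trans (vnorm2_mulmx_le _ _)).
by rewrite ler_wpM2l ?opnorm_ge0 ?vnorm2_mulmx_le.
Qed.

Lemma opnorm1_le n : opnorm (1%:M : 'M[R]_n) <= 1.
Proof. by apply: opnorm_le => // x; rewrite mul1mx mul1r. Qed.

End OperatorNorm.

Section MatrixPowers.
Variables (R : realType) (d : nat).
Implicit Types X Y V : 'M[R]_d.

Lemma opnorm_mxpow_le X a k : opnorm X <= a -> opnorm (mxpow X k) <= a ^+ k.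
Proof.
move=> Xa; have a0 : 0 <= a := le_trans (opnorm_ge0 _) Xa.
elim: k => [|k IH] /=; first by rewrite expr0 opnorm1_le.
by rewrite exprS (le_trans (opnormM_le _ _)) // ler_pM ?opnorm_ge0.
Qed.

Lemma opnorm_mxpowB_le X Y a k : opnorm X <= a -> opnorm Y <= a ->
  opnorm (mxpow X k - mxpow Y k) <= k%:R * a ^+ k.-1 * opnorm (X - Y).
Proof.
move=> Xa Ya; have a0 : 0 <= a := le_trans (opnorm_ge0 _) Xa.
set e := opnorm (X - Y); have e0 : 0 <= e := opnorm_ge0 _.
elim: k => [|k IH] /=; first by rewrite subrr opnorm0 !mul0r.
have -> : X *m mxpow X k - Y *m mxpow Y k =
          X *m (mxpow X k - mxpow Y k) + (X - Y) *m mxpow Y k.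
  by rewrite mulmxBr mulmxBl addrA subrK.
apply: (le_trans (opnormD_le _ _)).
apply: (le_trans (lerD (opnormM_le _ _) (opnormM_le _ _))).
have head : opnorm X * opnorm (mxpow X k - mxpow Y k) <= a * (k%:R * a ^+ k.-1 * e).
  by rewrite ler_pM ?opnorm_ge0.
have tail : e * opnorm (mxpow Y k) <= e * a ^+ k.
  by rewrite ler_wpM2l ?opnorm_mxpow_le.
suff <- : a * (k%:R * a ^+ k.-1 * e) + e * a ^+ k = k.+1%:R * a ^+ k * e.
  exact: lerD head tail.
by case: k {IH head tail} => [|k] /=; rewrite ?exprS; ring.
Qed.

Lemma opnorm_mul_trmx_le V : opnorm (V *m V^T) <= opnorm V ^+ 2.
Proof. by rewrite expr2 (le_trans (opnormM_le _ _)) ?ler_wpM2l ?opnorm_ge0 ?opnorm_trmx_le. Qed.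

Lemma opnorm_trmx_mul_le V : opnorm (V^T *m V) <= opnorm V ^+ 2.
Proof. by rewrite expr2 (le_trans (opnormM_le _ _)) ?ler_wpM2r ?opnorm_ge0 ?opnorm_trmx_le. Qed.

Lemma opnorm_conj_trmx_le V X : opnorm (V *m X *m V^T) <= opnorm V ^+ 2 * opnorm X.
Proof.
rewrite expr2 (le_trans (opnormM_le _ _)) // -mulrA mulrC.
by rewrite ler_pM ?opnorm_ge0 ?opnorm_trmx_le // (le_trans (opnormM_le _ _)).
Qed.

Lemma mxpowS_mul_trmx V k :
  mxpow (V *m V^T) k.+1 = V *m mxpow (V^T *m V) k *m V^T.
Proof.
elim: k => [|k IH]; first by rewrite /= !mulmx1.
by rewrite -[LHS]/(V *m V^T *m mxpow (V *m V^T) k.+1) IH /= !mulmxA.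
Qed.

End MatrixPowers.

Lemma opnorm_gram_step (R : realType) d (V P A : 'M[R]_d) a k :
  opnorm V ^+ 2 <= a -> opnorm A <= a ->
  opnorm (V *m P *m (V *m P)^T - mxpow (V *m V^T) k.+1)
    <= a * (opnorm (P *m P^T - mxpow A k)
            + k%:R * a ^+ k.-1 * opnorm (V^T *m V - A)).
Proof.
move=> Va Aa; have Ba : opnorm (V^T *m V) <= a := le_trans (opnorm_trmx_mul_le V) Va.
have -> : V *m P *m (V *m P)^T - mxpow (V *m V^T) k.+1 =
          V *m ((P *m P^T - mxpow A k) + (mxpow A k - mxpow (V^T *m V) k)) *m V^T.
  by rewrite mxpowS_mul_trmx addrA subrK trmx_mul mulmxBr mulmxBl !mulmxA.
apply: (le_trans (opnorm_conj_trmx_le _ _)).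
rewrite ler_pM ?exprn_ge0 ?opnorm_ge0 //.
apply: (le_trans (opnormD_le _ _)).
by rewrite lerD2l opnormB opnorm_mxpowB_le.
Qed.

Section BalancedProducts.
Variables (R : realType) (d : nat) (W : nat -> 'M[R]_d) (alpha delta : R) (n : nat).
Hypothesis alpha_ge0 : 0 <= alpha.
Hypothesis delta_ge0 : 0 <= delta.
Hypothesis W_le : forall l, (1 <= l <= n)%N -> opnorm (W l) <= alpha.
Hypothesis W_balanced : forall l, (1 <= l < n)%N ->
  opnorm ((W l.+1)^T *m W l.+1 - W l *m (W l)^T) <= delta.

Lemma opnorm_prodW_gram_le k : (k <= n)%N ->
  opnorm (prodW W k *m (prodW W k)^T - mxpow (W k *m (W k)^T) k) * 2
    <= (k * k.-1)%:R * (alpha ^+ 2) ^+ k.-1 * delta.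
Proof.
elim: k => [|[|k] IH] kn.
- by rewrite /= trmx1 mulmx1 subrr opnorm0 !mul0r.
- by rewrite /= !mulmx1 subrr opnorm0 !mul0r.
have {}IH := IH (ltnW kn).
have Va : opnorm (W k.+2) ^+ 2 <= alpha ^+ 2.
  by rewrite lerXn2r ?nnegrE ?opnorm_ge0 ?W_le.
have Aa : opnorm (W k.+1 *m (W k.+1)^T) <= alpha ^+ 2.
  apply: (le_trans (opnorm_mul_trmx_le _)).
  by rewrite lerXn2r ?nnegrE ?opnorm_ge0 // W_le //; lia.
have step := opnorm_gram_step (prodW W k.+1) k.+1 Va Aa.
have BA := W_balanced (l := k.+1) (ltac:(lia)).
set E := opnorm (_ - mxpow _ k.+1) in IH step.
set F := opnorm (_ - W k.+1 *m _) in step BA.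
set q := (alpha ^+ 2) ^+ k in IH step *.
have q0 : 0 <= q by rewrite !exprn_ge0.
have a0 : 0 <= alpha ^+ 2 by rewrite exprn_ge0.
apply: (le_trans (ler_wpM2r (ler0n _ 2) step)) => /=.
rewrite [_ ^+ k.+1]exprS -/q.
have -> : (k.+2 * k.+1)%:R * (alpha ^+ 2 * q) * delta
          = alpha ^+ 2 * ((k.+1 * k)%:R * q * delta + 2 * (k.+1%:R * q * delta)).
  by ring.
rewrite -[X in X <= _]mulrA ler_wpM2l // mulrDl lerD // mulrC ler_wpM2l //.
by rewrite ler_wpM2l ?mulr_ge0.
Qed.

End BalancedProducts.

Theorem lemma5 (R : realType) (d L : nat) (alpha delta : R)
  (W : nat -> 'M[R]_d) :
  (1 <= d)%N -> (2 <= L)%N -> 0 <= alpha -> 0 <= delta ->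
  (forall l : nat, (1 <= l <= L.-1)%N -> opnorm (W l) <= alpha) ->
  (forall l : nat, (1 <= l <= L.-2)%N ->
     opnorm ((W l.+1)^T *m W l.+1 - W l *m (W l)^T) <= delta) ->
  opnorm (prodW W (L.-1) *m (prodW W (L.-1))^T
          - mxpow (W (L.-1) *m (W (L.-1))^T) (L.-1))
    <= (2%:R : R)^-1 * (L%:R) ^+ 2 * alpha ^+ (2 * (L.-2)) * delta.
Proof.
move=> _ L2 alpha0 delta0 W_le W_balanced.
have W_balanced' l : (1 <= l < L.-1)%N ->
    opnorm ((W l.+1)^T *m W l.+1 - W l *m (W l)^T) <= delta.
  by move=> lL; apply: W_balanced; lia.
have := opnorm_prodW_gram_le alpha0 delta0 W_le W_balanced' (leqnn L.-1).
rewrite -exprM => /le_trans bound.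
rewrite -2!mulrA ler_pdivlMl // mulrC bound //.
rewrite -[X in X <= _]mulrA -natrX ler_wpM2r ?mulr_ge0 ?exprn_ge0 // ler_nat.
by apply: leq_mul; lia.
Qed.
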